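(* Let $A\in\{0,1\}^{N\times n}$ and let $U_1,\dots,U_N,V_1,\dots,V_n\in\mathbb{R}^d$ be a margin-$m$, relative-bias-$0$ embedding of $A$. Define the linear map $V:\mathbb{R}^n\to\mathbb{R}^d$ by $Ve_i=V_i$. Suppose $S\subseteq[n]$ is shattered by the family of row supports $\mathcal{C}_A=\{\{i\in[n]:A_{ji}=1\}: j\in[N]\}$. Then every $x\in\mathbb{R}^n$ supported on $S$ satisfies $\|Vx\|_2\ge m\|x\|_1$.
   Context: For $A\in\{0,1\}^{N\times n}$ and $m\ge0$, unit vectors $U_1,\dots,U_N,V_1,\dots,V_n\in\mathbb{R}^d$ form a margin-$m$, relative-bias-$0$ embedding of $A$ if $\langle U_j,V_i\rangle\ge m$ whenever $A_{ji}=1$ and $\langle U_j,V_i\rangle\le -m$ whenever $A_{ji}=0$. A set $B\subseteq[n]$ is shattered by a family $\mathcal{S}$ of subsets of $[n]$ if for every $C\subseteq B$ there is $S'\in\mathcal{S}$ with $S'\cap B=C$. *)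

From mathcomp Require Import all_boot all_order all_algebra.
From mathcomp Require Import reals.
Set Implicit Arguments. Unset Strict Implicit. Unset Printing Implicit Defensive.
Import Order.TTheory GRing.Theory Num.Theory.
Local Open Scope ring_scope.

Definition dotv (R : realType) (d : nat) (u v : 'rV[R]_d) : R :=
  \sum_(k < d) u ord0 k * v ord0 k.

Definition norm2 (R : realType) (d : nat) (u : 'rV[R]_d) : R :=
  Num.sqrt (dotv u u).

Definition norm1 (R : realType) (n : nat) (x : 'rV[R]_n) : R :=
  \sum_(i < n) `|x ord0 i|.

Definition unit_vec (R : realType) (d : nat) (u : 'rV[R]_d) : Prop :=
  norm2 u = 1.

Definition margin_embedding (R : realType) (N n d : nat)
  (A : 'I_N -> 'I_n -> bool) (m : R)
  (U : 'I_N -> 'rV[R]_d) (V : 'I_n -> 'rV[R]_d) : Prop :=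
  (forall j, unit_vec (U j)) /\ (forall i, unit_vec (V i)) /\
  (forall j i, A j i -> m <= dotv (U j) (V i)) /\
  (forall j i, ~~ A j i -> dotv (U j) (V i) <= - m).

Definition row_support (N n : nat) (A : 'I_N -> 'I_n -> bool) (j : 'I_N)
  : {set 'I_n} := [set i | A j i].

Definition shattered (n : nat) (F : {set 'I_n} -> Prop) (B : {set 'I_n}) : Prop :=
  forall C : {set 'I_n}, C \subset B ->
    exists S' : {set 'I_n}, F S' /\ S' :&: B = C.

Definition linmap (R : realType) (n d : nat) (V : 'I_n -> 'rV[R]_d)
  (x : 'rV[R]_n) : 'rV[R]_d :=
  \sum_(i < n) x ord0 i *: V i.

From mathcomp Require Import all_boot all_order all_algebra.
From mathcomp Require Import reals.
From mathcomp Require Import ring lra.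
Import Order.TTheory GRing.Theory Num.Theory.
Local Open Scope ring_scope.

(* Shattering yields a row j of A whose support meets S exactly where x is
   positive.  Then <U_j, V_i> >= m where x_i > 0 and <U_j, V_i> <= -m where
   x_i <= 0 (i in S), so <U_j, V x> = sum_i x_i <U_j, V_i> >= m |x|_1, and
   Cauchy-Schwarz against the unit vector U_j bounds the left side by
   |V x|_2. *)

Section MarginEmbedding.
Set Implicit Arguments.

Variable R : realType.

Lemma dotv_ge0 (d : nat) (u : 'rV[R]_d) : 0 <= dotv u u.
Proof. by apply: sumr_ge0 => k _; rewrite -expr2 sqr_ge0. Qed.

Lemma dotv_linmap (n d : nat) (V : 'I_n -> 'rV[R]_d)
    (u : 'rV[R]_d) (x : 'rV[R]_n) :
  dotv u (linmap V x) = \sum_(i < n) x ord0 i * dotv u (V i).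
Proof.
rewrite /dotv /linmap.
under eq_bigr => k _ do rewrite summxE mulr_sumr.
rewrite exchange_big /=; apply: eq_bigr => i _.
by rewrite mulr_sumr; apply: eq_bigr => k _; rewrite mxE; ring.
Qed.

Lemma dotv_subZ (d : nat) (u w : 'rV[R]_d) (t : R) :
  dotv (w - t *: u) (w - t *: u) =
  dotv w w - 2 * t * dotv u w + t ^+ 2 * dotv u u.
Proof.
rewrite /dotv !mulr_sumr -sumrB -big_split /=.
by apply: eq_bigr => k _; rewrite !mxE; ring.
Qed.

Lemma dotv_le_norm2_unit (d : nat) (u w : 'rV[R]_d) :
  unit_vec u -> dotv u w <= norm2 w.
Proof.
rewrite /unit_vec /norm2 => u1.
have uu1 : dotv u u = 1 by rewrite -(sqr_sqrtr (dotv_ge0 u)) u1 expr1n.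
set t := dotv u w.
have t2_le : t ^+ 2 <= dotv w w.
  have := dotv_ge0 (w - t *: u); rewrite dotv_subZ uu1 -/t; lra.
by rewrite (le_trans (ler_norm t)) // -sqrtr_sqr ler_wsqrtr.
Qed.

Lemma margin_mul_norm_le (m a c : R) :
  (0 < a -> m <= c) -> (a <= 0 -> c <= - m) -> m * `|a| <= a * c.
Proof.
move=> pos neg; have [a_gt0 | a_le0] := ltrP 0 a.
- by rewrite gtr0_norm //; have := pos a_gt0; nra.
- by rewrite ler0_norm //; have := neg a_le0; nra.
Qed.

Lemma shattered_row_sign (N n : nat) (A : 'I_N -> 'I_n -> bool)
    (S : {set 'I_n}) (P : pred 'I_n) :
  shattered (fun S' => exists j : 'I_N, S' = row_support A j) S ->
  exists j : 'I_N, forall i, i \in S -> A j i = P i.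
Proof.
move=> shS.
have sub : [set i in S | P i] \subset S.
  by apply/subsetP => i; rewrite inE => /andP[].
have [_ [[j ->] row_jS]] := shS _ sub.
exists j => i iS.
by have := congr1 (fun B : {set 'I_n} => i \in B) row_jS; rewrite !inE iS andbT.
Qed.

End MarginEmbedding.

Theorem lemmaF1 (R : realType) (N n d : nat) (A : 'I_N -> 'I_n -> bool)
  (m : R) (U : 'I_N -> 'rV[R]_d) (V : 'I_n -> 'rV[R]_d) (S : {set 'I_n}) :
  0 <= m ->
  margin_embedding A m U V ->
  shattered (fun S' => exists j : 'I_N, S' = row_support A j) S ->
  forall x : 'rV[R]_n, (forall i, i \notin S -> x ord0 i = 0) ->
    m * norm1 x <= norm2 (linmap V x).
Proof.
move=> _ [U1 [_ [pos neg]]] shS x suppx.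
have [j sgn_j] := shattered_row_sign (fun i => 0 < x ord0 i) shS.
apply: le_trans (dotv_le_norm2_unit _ (U1 j)).
rewrite dotv_linmap /norm1 mulr_sumr; apply: ler_sum => i _.
have [iS | iNS] := boolP (i \in S); last by rewrite suppx // normr0 mulr0 mul0r.
apply: margin_mul_norm_le => [x_gt0 | x_le0]; first by apply: pos; rewrite sgn_j.
by apply: neg; rewrite sgn_j // -leNgt.
Qed.
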